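(* Let $v,d\in\mathbb{C}$ with $d\neq0$, $v\neq0$, and let $V(v,d)\subset\mathbb{C}P^2$ be the quartic curve $Xu_0^2-2v(u_2^2+u_1^2)u_2u_0+Xu_2^2=0$, where $X=du_2^2+2vu_1u_2+du_1^2$. If $d\neq\pm2v$, the only singular points of $V(v,d)$ are $[1,0,0]$ and $[0,1,0]$ and $V(v,d)$ is an irreducible quartic curve; moreover, if $d^2\neq v^2$ both singular points are nodes, and if $d^2=v^2$ both are ordinary cusps. If $d=2v$, then $V(v,d)$ is irreducible and has exactly one singular point $[1,-1,1]$ in addition to $[1,0,0],[0,1,0]$, and this point is a node. If $d=-2v$, then $V(v,d)$ is irreducible and has exactly one singular point $[-1,1,1]$ in addition to $[1,0,0],[0,1,0]$, and this point is a node.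
   Context: Coordinates $[u_0,u_1,u_2]$ on $\mathbb{C}P^2$. A singular point of the curve is a point where all partial derivatives of the defining polynomial vanish. *)

From HB Require Import structures.
From mathcomp Require Import all_boot all_order all_algebra.
From mathcomp Require Import mpoly.
From mathcomp Require Export complex.

Set Implicit Arguments.
Unset Strict Implicit.
Unset Printing Implicit Defensive.

Import GRing.Theory Num.Theory.
Local Open Scope ring_scope.

Definition i0 : 'I_3 := @Ordinal 3 0 isT.
Definition i1 : 'I_3 := @Ordinal 3 1 isT.
Definition i2 : 'I_3 := @Ordinal 3 2 isT.

Section Curves.
Variable C : fieldType.

Definition pt3 (a b c : C) : 'I_3 -> C := fun i => nth 0 [:: a; b; c] i.

Definition Xpoly (v d : C) : {mpoly C[3]} :=
  d *: 'X_i2 ^+ 2 + (2 * v) *: ('X_i1 * 'X_i2) + d *: 'X_i1 ^+ 2.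

Definition Vpoly (v d : C) : {mpoly C[3]} :=
  Xpoly v d * 'X_i0 ^+ 2
  - (2 * v) *: (('X_i2 ^+ 2 + 'X_i1 ^+ 2) * 'X_i2 * 'X_i0)
  + Xpoly v d * 'X_i2 ^+ 2.

Definition nonzero3 (a b c : C) : Prop := ~ (a = 0 /\ b = 0 /\ c = 0).

Definition proj_eq (a b c a' b' c' : C) : Prop :=
  exists k : C, k != 0 /\ a' = k * a /\ b' = k * b /\ c' = k * c.

Definition singular_pt (F : {mpoly C[3]}) (a b c : C) : Prop :=
  nonzero3 a b c /\ F.@[pt3 a b c] = 0 /\
  forall i : 'I_3, (F^`M(i)).@[pt3 a b c] = 0.

(** irreducibility in C[u0,u1,u2]: non-constant, and every factorisation
    has a constant factor *)
Definition irreducible_mpoly (F : {mpoly C[3]}) : Prop :=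
  (1 < msize F)%N /\
  forall p q : {mpoly C[3]}, F = p * q -> (msize p <= 1)%N \/ (msize q <= 1)%N.

(** local equation of F = 0 around [a,b,c] in the standard affine chart
    u_i = 1 (i = first index with nonzero coordinate), in local affine
    coordinates (x,y) centered at the point *)
Definition local_eq (F : {mpoly C[3]}) (a b c : C) : {mpoly C[2]} :=
  let x : {mpoly C[2]} := 'X_(@Ordinal 2 0 isT) in
  let y : {mpoly C[2]} := 'X_(@Ordinal 2 1 isT) in
  if a != 0 then F \mPo [tuple 1; (b / a)%:MP + x; (c / a)%:MP + y]
  else if b != 0 then F \mPo [tuple (a / b)%:MP + x; 1; (c / b)%:MP + y]
  else F \mPo [tuple (a / c)%:MP + x; (b / c)%:MP + y; 1].

Definition lcoef (g : {mpoly C[2]}) (i j : nat) : C :=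
  g@_([multinom [tuple i; j]] : 'X_{1..2}).

Definition double_pt (g : {mpoly C[2]}) : Prop :=
  lcoef g 0 0 = 0 /\ lcoef g 1 0 = 0 /\ lcoef g 0 1 = 0 /\
  ~ (lcoef g 2 0 = 0 /\ lcoef g 1 1 = 0 /\ lcoef g 0 2 = 0).

Definition quad_part (g : {mpoly C[2]}) (x y : C) : C :=
  lcoef g 2 0 * x ^+ 2 + lcoef g 1 1 * x * y + lcoef g 0 2 * y ^+ 2.

Definition cubic_part (g : {mpoly C[2]}) (x y : C) : C :=
  lcoef g 3 0 * x ^+ 3 + lcoef g 2 1 * x ^+ 2 * y
  + lcoef g 1 2 * x * y ^+ 2 + lcoef g 0 3 * y ^+ 3.

Definition quad_disc (g : {mpoly C[2]}) : C :=
  lcoef g 1 1 ^+ 2 - 4%:R * lcoef g 2 0 * lcoef g 0 2.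

(** node: double point whose tangent cone consists of two distinct lines *)
Definition is_node (F : {mpoly C[3]}) (a b c : C) : Prop :=
  singular_pt F a b c /\
  let g := local_eq F a b c in double_pt g /\ quad_disc g != 0.

(** ordinary cusp: double point whose tangent cone is a double line l^2,
    with l not dividing the cubic term (the cubic term does not vanish on
    the tangent direction) *)
Definition is_ordinary_cusp (F : {mpoly C[3]}) (a b c : C) : Prop :=
  singular_pt F a b c /\
  let g := local_eq F a b c in
  [/\ double_pt g, quad_disc g = 0 &
      exists x y : C, ~ (x = 0 /\ y = 0) /\ quad_part g x y = 0 /\
                      cubic_part g x y != 0].

End Curves.

From HB Require Import structures.
From mathcomp Require Import all_boot all_order all_algebra.
From mathcomp Require Import mpoly.
From mathcomp Require Import complex.
From mathcomp Require Import ring zify.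

Set Implicit Arguments.
Unset Strict Implicit.
Unset Printing Implicit Defensive.

Import GRing.Theory Num.Theory.
Local Open Scope ring_scope.

(* F is homogeneous, so a singular point with u2 <> 0 can be moved to the
   chart u2 = 1, where the gradient equations force u0, u1 to be +-1 with
   d = (u0 - u1) v; the singular points with u2 = 0 are [1,0,0] and [0,1,0].
   For irreducibility, view F = X u0^2 - B u0 + X u2^2, with
   B = 2v (u1^2 + u2^2) u2, as a quadratic in u0 over C[u1,u2].  A factor of
   degree 0 in u0 divides both X and B, which have no common zero on the
   projective line, so it is constant.  A product of two linear factors would
   make the discriminant B^2 - 4 X^2 u2^2 a square, yet at u2 = 1 it has a
   simple root. *)

Lemma mderivXU (R : ringType) (n : nat) (i j : 'I_n) :
  ('X_j : {mpoly R[n]})^`M(i) = (j == i)%:R.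
Proof.
rewrite mderivX mnm1E; case: eqP => [->|_]; last by rewrite scale0r.
have -> : (U_(i) - U_(i) = 0)%MM by apply/mnmP => k; rewrite mnmBE subnn mnm0E.
by rewrite mpolyX0 scale1r.
Qed.

Lemma msize_dhomog (R : ringType) (n k : nat) (p : {mpoly R[n]}) :
  p != 0 -> p \is k.-homog -> msize p = k.+1.
Proof.
move=> p_neq0 p_homog; have := dhomog_uniq p_neq0 p_homog (dhomog_msize p_homog).
by have := msize_poly_eq0 p; rewrite (negbTE p_neq0); case: (msize p) => // ? _ ->.
Qed.

Lemma ord3P (i : 'I_3) : [\/ i = i0, i = i1 | i = i2].
Proof.
case: i => [[|[|[|k]]] lt_i3]; [constructor 1|constructor 2|constructor 3|by []];
  exact: val_inj.
Qed.

Lemma nonzero3_scale (C : fieldType) (k a b c : C) :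
  k != 0 -> nonzero3 a b c -> nonzero3 (k * a) (k * b) (k * c).
Proof.
move=> k_neq0 nz [/eqP ka0 [/eqP kb0 /eqP kc0]]; apply: nz.
by move: ka0 kb0 kc0; rewrite !mulf_eq0 (negbTE k_neq0) /= => /eqP-> /eqP-> /eqP->.
Qed.

Lemma proj_eq_refl (C : fieldType) (a b c : C) : proj_eq a b c a b c.
Proof. by exists 1; rewrite oner_neq0 !mul1r. Qed.

Section QuadraticPolynomials.
Variable R : idomainType.
Implicit Types (p q g : {poly R}) (a b c z : R).

Definition quadratic a b c : {poly R} := a%:P * 'X^2 + b%:P * 'X + c%:P.

Lemma coef_quadratic a b c i :
  (quadratic a b c)`_i = if i == 2%N then a else if i == 1%N then b
                         else if i == 0%N then c else 0.
Proof.
rewrite !coefD !coefCM coefXn coefX coefC.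
by case: i => [|[|[|i]]] /=; rewrite ?mulr0 ?mulr1 ?addr0 ?add0r.
Qed.

Lemma horner_quadratic a b c z : (quadratic a b c).[z] = a * z ^+ 2 + b * z + c.
Proof. by rewrite /quadratic !(hornerD, hornerCM, hornerXn, hornerX, hornerC). Qed.

Lemma ltn_size_coef p i : p`_i != 0 -> (i < size p)%N.
Proof. by rewrite ltnNge; apply: contra => /(nth_default 0)->. Qed.

Lemma size_quadratic a b c : a != 0 -> size (quadratic a b c) = 3%N.
Proof.
move=> a_neq0; apply/eqP; rewrite eqn_leq; apply/andP; split.
  by apply/leq_sizeP => -[|[|[|j]]] //= _; rewrite coef_quadratic.
by apply: ltn_size_coef; rewrite coef_quadratic.
Qed.

Lemma lead_coef_quadratic a b c : a != 0 -> lead_coef (quadratic a b c) = a.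
Proof. by move=> a_neq0; rewrite lead_coefE size_quadratic // coef_quadratic. Qed.

Lemma deriv_quadratic a b c : (quadratic a b c)^`() = (a *+ 2)%:P * 'X + b%:P.
Proof.
by rewrite /quadratic !derivE /= expr1 mulr1 addr0 polyCMn mulrnAl mulrnAr.
Qed.

Lemma coef_mul_linear p q : (size p <= 2)%N -> (size q <= 2)%N ->
  [/\ (p * q)`_2 = p`_1 * q`_1, (p * q)`_1 = p`_0 * q`_1 + p`_1 * q`_0 &
      (p * q)`_0 = p`_0 * q`_0].
Proof.
move=> /leq_sizeP/(_ 2%N (leqnn _)) p2 /leq_sizeP/(_ 2%N (leqnn _)) q2.
by rewrite !coefM !big_ord_recr !big_ord0 /= p2 q2 !(mulr0, mul0r, add0r, addr0).
Qed.

Lemma root_deriv_sqr g z : root (g ^+ 2) z -> root (g ^+ 2)^`() z.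
Proof.
rewrite /root horner_exp expf_eq0 /= => /eqP gz.
by rewrite deriv_exp hornerMn hornerM horner_exp gz expr1 mulr0 mul0rn.
Qed.

Lemma simple_root_mul p q z : root p z -> ~~ root p^`() z -> ~~ root q z ->
  root (p * q) z && ~~ root (p * q)^`() z.
Proof.
rewrite /root derivM !hornerE => /eqP-> dp_neq0 q_neq0.
by rewrite mul0r eqxx mul0r addr0 mulf_neq0.
Qed.

End QuadraticPolynomials.

Lemma map_quadratic (R S : idomainType) (f : {rmorphism R -> S}) (a b c : R) :
  map_poly f (quadratic a b c) = quadratic (f a) (f b) (f c).
Proof. by rewrite /quadratic !(rmorphD, rmorphM, rmorphXn) /= map_polyX !map_polyC. Qed.

Lemma palindromic_simple_root (C : closedFieldType) (a b : C) :
  b != 0 -> b ^+ 2 != 4%:R * a ^+ 2 ->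
  exists z, root (quadratic a b a) z && ~~ root (quadratic a b a)^`() z.
Proof.
move=> b_neq0 disc_neq0.
have [z rz] : exists z, root (quadratic a b a) z.
  apply/closed_rootP; rewrite neq_ltn orbC ltn_size_coef //.
  by rewrite coef_quadratic.
exists z; rewrite rz /=; apply: contra disc_neq0.
move: rz; rewrite /root deriv_quadratic horner_quadratic.
rewrite !(hornerD, hornerCM, hornerX, hornerC) => /eqP rz /eqP dz.
have -> : b ^+ 2 = (a *+ 2 * z + b) ^+ 2 - 4%:R * a * (a * z ^+ 2 + b * z + a) + 4%:R * a ^+ 2.
  by ring.
by rewrite dz rz; apply/eqP; ring.
Qed.

Section NestedPolynomials.
Variable R : comNzRingType.
Local Notation E := {poly {poly {poly R}}}.

Definition nest_var (i : 'I_3) : E :=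
  match val i with 0 => 'X | 1 => 'X%:P | _ => 'X%:P%:P end.

Definition nest : {mpoly R[3]} -> E := mmap (polyC \o polyC \o polyC) nest_var.

HB.instance Definition _ := GRing.RMorphism.on nest.

Lemma nestD p q : nest (p + q) = nest p + nest q. Proof. exact: rmorphD. Qed.
Lemma nestN p : nest (- p) = - nest p. Proof. exact: rmorphN. Qed.
Lemma nestM p q : nest (p * q) = nest p * nest q. Proof. exact: rmorphM. Qed.
Lemma nestXn p k : nest (p ^+ k) = nest p ^+ k. Proof. exact: rmorphXn. Qed.

Lemma nestC c : nest c%:MP = c%:P%:P%:P.
Proof. exact: mmapC. Qed.

Lemma nestX i : nest 'X_i = nest_var i.
Proof. by rewrite /nest mmapX mmap1U. Qed.

Lemma nestZ c p : nest (c *: p) = c%:P%:P%:P * nest p.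
Proof. exact: mmapZ. Qed.

Lemma mnm3_eqE (m m' : 'X_{1..3}) :
  (m' == m) = [&& m' i0 == m i0, m' i1 == m i1 & m' i2 == m i2].
Proof.
apply/eqP/and3P => [->|[/eqP h0 /eqP h1 /eqP h2]]; first by rewrite !eqxx.
by apply/mnmP => i; case: (ord3P i) => ->.
Qed.

Lemma coef_nest_mono (m m' : 'X_{1..3}) :
  (((nest 'X_[m'])`_(m i0))`_(m i1))`_(m i2) = (m' == m)%:R.
Proof.
rewrite /nest mmapX /mmap1 !big_ord_recr big_ord0 /= mul1r.
rewrite [widen_ord _ (widen_ord _ _)](_ : _ = i0); last exact: val_inj.
rewrite [widen_ord _ _](_ : _ = i1); last exact: val_inj.
rewrite [ord_max](_ : _ = i2); last exact: val_inj.
rewrite /nest_var /= -mulrA -[_%:P ^+ m' i2]polyC_exp -[_ ^+ m' i1]polyC_exp -polyCM.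
rewrite mulrC coefCM coefXn mulr_natr coefMn -polyC_exp mulrC coefCM coefXn mulr_natr.
rewrite !coefMn coefXn mnm3_eqE ![m' _ == _]eq_sym.
by case: (m i0 == _); case: (m i1 == _); case: (m i2 == _).
Qed.

Lemma coef_nest p (m : 'X_{1..3}) : (((nest p)`_(m i0))`_(m i1))`_(m i2) = p@_m.
Proof.
elim/mpolyind: p => [|c m' p _ _ IH]; first by rewrite raddf0 !coef0 mcoeff0.
by rewrite nestD nestZ !coefD IH mcoeffD mcoeffZ mcoeffX !coefCM coef_nest_mono.
Qed.

Lemma nest_inj : injective nest.
Proof. by move=> p q eq_pq; apply/mpolyP => m; rewrite -!coef_nest eq_pq. Qed.

End NestedPolynomials.

Definition mono2 {C : fieldType} (i j : nat) : {mpoly C[2]} :=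
  'X_(@Ordinal 2 0 isT) ^+ i * 'X_(@Ordinal 2 1 isT) ^+ j.

Section LocalCoefficients.
Variable C : fieldType.
Implicit Types g h : {mpoly C[2]}.

Lemma lcoef_mono2 i j a b :
  lcoef (mono2 i j : {mpoly C[2]}) a b = ((i == a) && (j == b))%:R.
Proof.
rewrite /lcoef /mono2 !mpolyXn -mpolyXD mcoeffX.
suff -> : (U_(@Ordinal 2 0 isT) *+ i + U_(@Ordinal 2 1 isT) *+ j
           == [multinom [tuple a; b]])%MM = (i == a) && (j == b) by [].
have tuple_a : [multinom [tuple a; b]] (@Ordinal 2 0 isT) = a by [].
have tuple_b : [multinom [tuple a; b]] (@Ordinal 2 1 isT) = b by [].
apply/eqP/andP => [/mnmP eq_ij|[/eqP <- /eqP <-]].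
  move: (eq_ij (@Ordinal 2 0 isT)) (eq_ij (@Ordinal 2 1 isT)).
  by rewrite tuple_a tuple_b !mnmDE !mulmnE !mnm1E /= => <- <-; lia.
apply/mnmP => -[[|[|k]] lt_k2] //.
all: by rewrite mnmDE !mulmnE !mnm1E /= mul1n mul0n ?addn0.
Qed.

Lemma lcoefD g h a b : lcoef (g + h) a b = lcoef g a b + lcoef h a b.
Proof. exact: mcoeffD. Qed.

Lemma lcoefZ (c : C) g a b : lcoef (c *: g) a b = c * lcoef g a b.
Proof. exact: mcoeffZ. Qed.

Lemma node_of_quad_disc g :
  lcoef g 0 0 = 0 -> lcoef g 1 0 = 0 -> lcoef g 0 1 = 0 -> quad_disc g != 0 ->
  double_pt g /\ quad_disc g != 0.
Proof.
move=> g00 g10 g01 disc_neq0; do 4!split => //.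
case=> g20 [g11 g02]; move: disc_neq0.
by rewrite /quad_disc g20 g11 g02 !mulr0 expr0n subrr eqxx.
Qed.

End LocalCoefficients.

Section SingularPoints.
Variables (C : numFieldType) (v d : C).
Hypotheses (d_neq0 : d != 0) (v_neq0 : v != 0).
Local Notation F := (Vpoly v d).

Definition Xval (b c : C) := d * c ^+ 2 + 2%:R * v * b * c + d * b ^+ 2.
Definition Vval (a b c : C) :=
  Xval b c * (a ^+ 2 + c ^+ 2) - 2%:R * v * (c ^+ 2 + b ^+ 2) * c * a.
Definition dV0 (a b c : C) := 2%:R * a * Xval b c - 2%:R * v * (c ^+ 2 + b ^+ 2) * c.
Definition dV1 (a b c : C) :=
  (2%:R * d * b + 2%:R * v * c) * (a ^+ 2 + c ^+ 2) - 4%:R * v * a * b * c.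
Definition dV2 (a b c : C) :=
  (2%:R * d * c + 2%:R * v * b) * (a ^+ 2 + c ^+ 2) + 2%:R * c * Xval b c
  - 2%:R * v * a * (3%:R * c ^+ 2 + b ^+ 2).

Ltac meval_ring := rewrite /Vpoly /Xpoly /Vval /dV0 /dV1 /dV2 /Xval ?expr2;
  rewrite ?(mderivD, mderivB, mderivN, mderivM, mderivZ, mderivXU) /=;
  rewrite !(mevalD, mevalB, mevalN, mevalM, mevalZ, mevalXU, mevalC, meval1, meval0);
  rewrite /pt3 /=; ring.

Lemma meval_Vpoly a b c : F.@[pt3 a b c] = Vval a b c. Proof. meval_ring. Qed.
Lemma meval_dVpoly0 a b c : (F^`M(i0)).@[pt3 a b c] = dV0 a b c. Proof. meval_ring. Qed.
Lemma meval_dVpoly1 a b c : (F^`M(i1)).@[pt3 a b c] = dV1 a b c. Proof. meval_ring. Qed.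
Lemma meval_dVpoly2 a b c : (F^`M(i2)).@[pt3 a b c] = dV2 a b c. Proof. meval_ring. Qed.

Lemma Vpoly_neq0 : F != 0.
Proof.
apply: contra_neq d_neq0 => F0.
have <- : Vval 1 1 0 = d by rewrite /Vval /Xval; ring.
by rewrite -meval_Vpoly F0 meval0.
Qed.

Lemma Vpoly_homog : F \is 4.-homog.
Proof.
have X_homog (i : 'I_3) : ('X_i : {mpoly C[3]}) \is 1.-homog by rewrite dhomogX /= mdeg1.
have X2_homog (i : 'I_3) : ('X_i : {mpoly C[3]}) ^+ 2 \is 2.-homog.
  exact: (dhomogMn 2 (X_homog i)).
have Xpoly_homog : Xpoly v d \is 2.-homog.
  by rewrite /Xpoly !rpredD ?rpredZ // (dhomogM (X_homog _) (X_homog _)).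
rewrite /Vpoly rpredD ?rpredB ?(dhomogM Xpoly_homog) // rpredZ //.
by rewrite (dhomogM (d := 3)) // (dhomogM (rpredD (X2_homog _) (X2_homog _))).
Qed.

Lemma msize_Vpoly : msize F = 5%N.
Proof. exact: msize_dhomog Vpoly_neq0 Vpoly_homog. Qed.

Lemma singular_ptE a b c : singular_pt F a b c <-> nonzero3 a b c /\
  [/\ Vval a b c = 0, dV0 a b c = 0, dV1 a b c = 0 & dV2 a b c = 0].
Proof.
rewrite /singular_pt meval_Vpoly -meval_dVpoly0 -meval_dVpoly1 -meval_dVpoly2.
split=> [[nz [hV hdV]]|[nz [hV h0 h1 h2]]]; first by split; last split.
by do 2 split => //; move=> i; case: (ord3P i) => ->.
Qed.

Lemma singular_pt_proj_eq a b c a' b' c' :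
  proj_eq a b c a' b' c' -> singular_pt F a b c -> singular_pt F a' b' c'.
Proof.
case=> k [k_neq0 [-> [-> ->]]] /singular_ptE[nz [hV h0 h1 h2]].
apply/singular_ptE; split; first exact: nonzero3_scale.
have -> : Vval (k * a) (k * b) (k * c) = k ^+ 4 * Vval a b c by rewrite /Vval /Xval; ring.
have -> : dV0 (k * a) (k * b) (k * c) = k ^+ 3 * dV0 a b c by rewrite /dV0 /Xval; ring.
have -> : dV1 (k * a) (k * b) (k * c) = k ^+ 3 * dV1 a b c by rewrite /dV1; ring.
have -> : dV2 (k * a) (k * b) (k * c) = k ^+ 3 * dV2 a b c by rewrite /dV2 /Xval; ring.
by rewrite hV h0 h1 h2 !mulr0.
Qed.

Lemma singular_pt_at_infinity a b : nonzero3 a b 0 -> dV1 a b 0 = 0 ->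
  proj_eq 1 0 0 a b 0 \/ proj_eq 0 1 0 a b 0.
Proof.
move=> nz; have -> : dV1 a b 0 = 2%:R * d * (b * a ^+ 2) by rewrite /dV1; ring.
move/eqP; rewrite !mulf_eq0 pnatr_eq0 (negbTE d_neq0) /= orbb => /orP[]/eqP ab0.
  left; exists a; rewrite ab0 !mulr0 mulr1; split=> //.
  by apply/eqP => a0; apply: nz; rewrite a0 ab0.
right; exists b; rewrite ab0 !mulr0 mulr1; split=> //.
by apply/eqP => b0; apply: nz; rewrite ab0 b0.
Qed.

Lemma singular_pt_affine a b : Vval a b 1 = 0 -> dV0 a b 1 = 0 -> dV1 a b 1 = 0 ->
  (d = 2%:R * v /\ a = 1 /\ b = -1) \/ (d = - (2%:R * v) /\ a = -1 /\ b = 1).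
Proof.
move=> hV h0 h1; set X := Xval b 1; set S := 1 + b ^+ 2.
have two_neq0 : 2%:R != 0 :> C by rewrite pnatr_eq0.
have aX : a * X - v * S = 0.
  apply: (mulfI two_neq0); rewrite mulr0 -h0 /dV0 /X /S; ring.
have X_neq0 : X != 0.
  apply/eqP => X0; have S0 : S = 0.
    apply: (mulfI v_neq0); rewrite mulr0.
    have -> : v * S = a * X - (a * X - v * S) by ring.
    by rewrite aX X0 mulr0 subr0.
  have b0 : b = 0.
    apply: (mulfI (mulf_neq0 two_neq0 v_neq0)); rewrite mulr0.
    have -> : 2%:R * v * b = X - d * S by rewrite /X /S /Xval; ring.
    by rewrite X0 S0 mulr0 subr0.
  by move: S0; rewrite /S b0 expr0n addr0 => /eqP; rewrite oner_eq0.
have a2 : a ^+ 2 = 1.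
  apply/eqP; rewrite eq_sym -subr_eq0; apply/eqP; apply: (mulfI X_neq0).
  have -> : X * (1 - a ^+ 2) = Vval a b 1 - 2%:R * a * (a * X - v * S).
    by rewrite /Vval /X /S; ring.
  by rewrite hV aX !mulr0 subr0.
have dab : (d - a * v) * b + v = 0.
  apply: (mulfI (_ : 4%:R != 0)); first by rewrite pnatr_eq0.
  have -> : 4%:R * ((d - a * v) * b + v) =
            dV1 a b 1 - (a ^+ 2 - 1) * (2%:R * d * b + 2%:R * v) by rewrite /dV1; ring.
  by rewrite h1 a2 subrr mul0r subr0 mulr0.
have dabS : (d - a * v) * S + 2%:R * v * b = 0.
  have -> : (d - a * v) * S + 2%:R * v * b = (1 - a ^+ 2) * X + a * (a * X - v * S).
    by rewrite /X /S /Xval; ring.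
  by rewrite a2 subrr aX mul0r mulr0 addr0.
have b2 : b ^+ 2 = 1.
  apply/eqP; rewrite -subr_eq0; apply/eqP; apply: (mulfI v_neq0).
  have -> : v * (b ^+ 2 - 1) = b * ((d - a * v) * S + 2%:R * v * b) - S * ((d - a * v) * b + v).
    by rewrite /S; ring.
  by rewrite dabS dab !mulr0 subr0.
have d_ab : d = (a - b) * v.
  apply/eqP; rewrite -subr_eq0; apply/eqP.
  have -> : d - (a - b) * v = b * ((d - a * v) * b + v) - (b ^+ 2 - 1) * (d - a * v) by ring.
  by rewrite dab b2 subrr mulr0 mul0r subr0.
move/eqP: a2; rewrite sqrf_eq1 => /orP[]/eqP ha;
  move/eqP: b2; rewrite sqrf_eq1 => /orP[]/eqP hb; rewrite ha hb in d_ab.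
- by move: d_neq0; rewrite d_ab subrr mul0r eqxx.
- by left; split => //; rewrite d_ab; ring.
- by right; split => //; rewrite d_ab; ring.
- by move: d_neq0; rewrite d_ab subrr mul0r eqxx.
Qed.

Lemma singular_ptP a b c : singular_pt F a b c <->
  [\/ proj_eq 1 0 0 a b c, proj_eq 0 1 0 a b c,
      d = 2%:R * v /\ proj_eq 1 (-1) 1 a b c |
      d = - (2%:R * v) /\ proj_eq (-1) 1 1 a b c].
Proof.
split=> [sing|].
  have [c0|c_neq0] := eqVneq c 0.
    move: sing; rewrite c0 => /singular_ptE[nz [_ _ h1 _]].
    by case: (singular_pt_at_infinity nz h1) => ?; [constructor 1|constructor 2].
  have /singular_ptE[_ [hV h0 h1 _]] : singular_pt F (c^-1 * a) (c^-1 * b) 1.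
    apply: singular_pt_proj_eq sing; exists c^-1.
    by rewrite invr_eq0 c_neq0 mulVf.
  have back x y : c^-1 * x = y -> x = c * y by move<-; rewrite mulrA divff ?mul1r.
  case: (singular_pt_affine hV h0 h1) => [[hd [/back ha /back hb]]|[hd [/back ha /back hb]]].
    by constructor 3; split=> //; exists c; rewrite ha hb mulr1.
  by constructor 4; split=> //; exists c; rewrite ha hb mulr1.
have sing_at x y z : nonzero3 x y z ->
    [/\ Vval x y z = 0, dV0 x y z = 0, dV1 x y z = 0 & dV2 x y z = 0] ->
    proj_eq x y z a b c -> singular_pt F a b c.
  by move=> nz eqs xyz; apply: singular_pt_proj_eq xyz _; apply/singular_ptE.
case=> [||[hd]|[hd]]; apply: sing_at;
  try by [case=> /eqP; rewrite oner_eq0 | case=> _ [/eqP]; rewrite oner_eq0];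
  by rewrite /Vval /dV0 /dV1 /dV2 /Xval ?hd; split; ring.
Qed.

Lemma two_v_neq_opp : 2%:R * v != - (2%:R * v).
Proof.
rewrite -subr_eq0 opprK [X in X != 0](_ : _ = 4%:R * v); last by ring.
by rewrite mulf_neq0 ?pnatr_eq0.
Qed.

Lemma singular_pt_generic a b c : d != 2%:R * v -> d != - (2%:R * v) ->
  singular_pt F a b c <-> proj_eq 1 0 0 a b c \/ proj_eq 0 1 0 a b c.
Proof.
move=> /negP d_neq2v /negP d_neqm2v; rewrite singular_ptP.
split; last by case; [constructor 1 | constructor 2].
by case=> [||[/eqP]|[/eqP]] //; [left | right].
Qed.

Lemma singular_pt_d2v a b c : d = 2%:R * v -> singular_pt F a b c <->
  [\/ proj_eq 1 0 0 a b c, proj_eq 0 1 0 a b c | proj_eq 1 (-1) 1 a b c].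
Proof.
move=> d2v; rewrite singular_ptP.
split; last by case=> ?; [constructor 1 | constructor 2 | constructor 3].
case=> [?|?|[_ ?]|[]]; [by constructor 1 | by constructor 2 | by constructor 3 |].
by rewrite d2v => /eqP; rewrite (negbTE two_v_neq_opp).
Qed.

Lemma singular_pt_dm2v a b c : d = - (2%:R * v) -> singular_pt F a b c <->
  [\/ proj_eq 1 0 0 a b c, proj_eq 0 1 0 a b c | proj_eq (-1) 1 1 a b c].
Proof.
move=> dm2v; rewrite singular_ptP.
split; last by case=> ?; [constructor 1 | constructor 2 | constructor 4].
case=> [?|?|[]|[_ ?]]; [by constructor 1 | by constructor 2 | | by constructor 3].
by rewrite dm2v => /esym/eqP; rewrite (negbTE two_v_neq_opp).
Qed.
End SingularPoints.

Section Irreducibility.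
Variables (C : numClosedFieldType) (v d : C).
Hypotheses (d_neq0 : d != 0) (v_neq0 : v != 0).
(* Via [nest], F is a polynomial in u0 with coefficients in [D], read as
   polynomials in u1 over C[u2]; [dehom] sets u2 = 1. *)
Local Notation D := {poly {poly C}}.
Local Notation dehom := (map_poly (horner_eval (1 : C))).

Definition u2 : D := 'X%:P.
Definition X12 : D := quadratic d%:P ((2%:R * v)%:P * 'X) (d%:P * 'X ^+ 2).
Definition B12 : D := quadratic ((2%:R * v)%:P * 'X) 0 ((2%:R * v)%:P * 'X ^+ 3).
Definition X1 : {poly C} := quadratic d (2%:R * v) d.
Definition B1 : {poly C} := quadratic (2%:R * v) 0 (2%:R * v).

Lemma nest_Vpoly : nest (Vpoly v d) = quadratic X12 (- B12) (X12 * u2 ^+ 2).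
Proof.
rewrite /Vpoly /Xpoly.
rewrite !(nestD, nestN, nestM, nestXn, nestZ, nestX) /nest_var /= /X12 /B12 /quadratic /u2.
ring.
Qed.

Lemma dehom_X12 : dehom X12 = X1.
Proof.
rewrite map_quadratic /= !horner_evalE.
by rewrite !(hornerCM, hornerXn, hornerX, hornerC, horner0) expr1n !mulr1.
Qed.

Lemma dehom_B12 : dehom B12 = B1.
Proof.
rewrite map_quadratic /= !horner_evalE.
by rewrite !(hornerCM, hornerXn, hornerX, hornerC, horner0) expr1n !mulr1.
Qed.

Lemma dehom_u2 : dehom u2 = 1.
Proof. by rewrite map_polyC /= horner_evalE hornerX. Qed.

Lemma X1_B1_no_common_root z : root X1 z -> ~~ root B1 z.
Proof.
rewrite /root !horner_quadratic => /eqP X1z; apply/negP => /eqP B1z.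
have two_v_neq0 : 2%:R * v != 0 by rewrite mulf_neq0 // pnatr_eq0.
have S0 : z ^+ 2 + 1 = 0 by apply: (mulfI two_v_neq0); rewrite mulr0 -B1z; ring.
have z0 : z = 0.
  apply: (mulfI two_v_neq0); rewrite mulr0.
  have -> : 2%:R * v * z = d * z ^+ 2 + 2%:R * v * z + d - d * (z ^+ 2 + 1) by ring.
  by rewrite X1z S0 mulr0 subr0.
by move: S0; rewrite z0 expr0n add0r => /eqP; rewrite oner_eq0.
Qed.

Lemma common_divisor_X12_B12 (c e1 e2 : D) :
  c * e1 = X12 -> c * e2 = B12 -> exists k : C, c = k%:P%:P.
Proof.
move=> ce1 ce2.
have X12_neq0 : X12 != 0 by rewrite -size_poly_eq0 size_quadratic ?polyC_eq0.
have /andP[c_neq0 e1_neq0] : (c != 0) && (e1 != 0) by rewrite -negb_or -mulf_eq0 ce1.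
(* The leading coefficient of c in u1 divides the constant d. *)
have [k k_neq0 lead_cE] : exists2 k, k != 0 & lead_coef c = k%:P.
  have /esym := size_mul_eq1 (lead_coef c) (lead_coef e1).
  rewrite -lead_coefM ce1 lead_coef_quadratic ?polyC_eq0 // size_polyC d_neq0.
  case/andP => /eqP/eq_leq/size1_polyC lead_cE _.
  exists (lead_coef c)`_0 => //.
  by rewrite -polyC_eq0 -lead_cE lead_coef_eq0.
have [size_c|size_c] := leqP (size c) 1.
  by exists k; rewrite -lead_cE (size1_polyC size_c) lead_coefC.
(* Otherwise c(u1, 1) has a root, which would be common to X1 and B1. *)
have size_dehom_c : size (dehom c) = size c.
  by apply: size_map_poly_id0; rewrite lead_cE /= horner_evalE hornerC.
have [z cz] : exists z, root (dehom c) z.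
  by apply/closed_rootP; rewrite size_dehom_c gtn_eqF.
have root_dehom e p : c * e = p -> root (dehom p) z.
  by move<-; rewrite rmorphM rootM cz.
move: (root_dehom _ _ ce1) (root_dehom _ _ ce2).
by rewrite dehom_X12 dehom_B12 => /X1_B1_no_common_root/negP.
Qed.

Lemma B1_subX1 : B1 - X1 *+ 2 = quadratic (2%:R * (v - d)) (- (4%:R * v)) (2%:R * (v - d)).
Proof. rewrite /B1 /X1 /quadratic; ring. Qed.

Lemma B1_addX1 : B1 + X1 *+ 2 = quadratic (2%:R * (v + d)) (4%:R * v) (2%:R * (v + d)).
Proof. rewrite /B1 /X1 /quadratic; ring. Qed.

(* The u0-discriminant B^2 - 4 X^2 u2^2 of F at u2 = 1. *)
Definition disc1 : {poly C} := (B1 - X1 *+ 2) * (B1 + X1 *+ 2).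

Lemma disc1_simple_root : exists z, root disc1 z && ~~ root disc1^`() z.
Proof.
have no_common z : root (B1 - X1 *+ 2) z -> ~~ root (B1 + X1 *+ 2) z.
  rewrite /root !(hornerD B1) hornerN !hornerMn => /eqP sub0; apply/negP => /eqP add0.
  have X1z : X1.[z] = 0.
    have : X1.[z] *+ 4 = (B1.[z] + X1.[z] *+ 2) - (B1.[z] - X1.[z] *+ 2) by ring.
    by rewrite add0 sub0 subr0 => /eqP; rewrite mulrn_eq0 => /eqP.
  have /X1_B1_no_common_root : root X1 z by apply/eqP.
  by rewrite /root; move: sub0; rewrite X1z mul0rn subr0 => ->; rewrite eqxx.
have four_v_neq0 : 4%:R * v != 0 by rewrite mulf_neq0 // pnatr_eq0.
have [d2v|d_neq2v] := eqVneq d (2%:R * v).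
  have [z /andP[rz dz]] : exists z, root (B1 + X1 *+ 2) z && ~~ root (B1 + X1 *+ 2)^`() z.
    rewrite B1_addX1; apply: palindromic_simple_root => //.
    rewrite d2v -subr_eq0.
    have -> : (4%:R * v) ^+ 2 - 4%:R * (2%:R * (v + 2%:R * v)) ^+ 2 = - (128%:R * v ^+ 2).
      by ring.
    by rewrite oppr_eq0 mulf_neq0 ?expf_neq0 // pnatr_eq0.
  by exists z; rewrite /disc1 mulrC simple_root_mul //; apply: contraL rz; apply: no_common.
have [z /andP[rz dz]] : exists z, root (B1 - X1 *+ 2) z && ~~ root (B1 - X1 *+ 2)^`() z.
  rewrite B1_subX1; apply: palindromic_simple_root; first by rewrite oppr_eq0.
  rewrite -subr_eq0.
  have -> : (- (4%:R * v)) ^+ 2 - 4%:R * (2%:R * (v - d)) ^+ 2 = 16%:R * d * (2%:R * v - d).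
    by ring.
  by rewrite !mulf_neq0 ?pnatr_eq0 // subr_eq0 eq_sym.
by exists z; rewrite /disc1 simple_root_mul // no_common.
Qed.

Lemma no_linear_factorization (a b c e : D) :
  a * c = X12 -> a * e + b * c = - B12 -> b * e = X12 * u2 ^+ 2 -> False.
Proof.
move=> ac aebc be.
have disc1_sqr : dehom (a * e - b * c) ^+ 2 = disc1.
  rewrite -rmorphXn.
  have -> : (a * e - b * c) ^+ 2 = (a * e + b * c) ^+ 2 - (a * c) * (b * e) *+ 4 by ring.
  rewrite aebc ac be !(rmorphB, rmorphMn, rmorphM, rmorphXn, rmorphN) /=.
  by rewrite dehom_X12 dehom_B12 dehom_u2 /disc1; ring.
have [z] := disc1_simple_root.
by rewrite -disc1_sqr => /andP[/root_deriv_sqr->].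
Qed.

Lemma nest_Vpoly_factor (P Q : {poly D}) : P * Q = nest (Vpoly v d) ->
  (exists k : C, P = k%:P%:P%:P) \/ (exists k : C, Q = k%:P%:P%:P).
Proof.
rewrite nest_Vpoly; wlog le_PQ : P Q / (size P <= size Q)%N.
  move=> hwlog PQ; have [/hwlog/(_ PQ)//|/ltnW le_QP] := leqP (size P) (size Q).
  by case: (hwlog Q P le_QP (etrans (mulrC Q P) PQ)); [right|left].
move=> PQ; have X12_neq0 : X12 != 0 by rewrite -size_poly_eq0 size_quadratic ?polyC_eq0.
have /andP[P_neq0 Q_neq0] : (P != 0) && (Q != 0).
  by rewrite -negb_or -mulf_eq0 PQ -size_poly_eq0 size_quadratic.
have size_PQ : (size P + size Q)%N = 4%N.
  have := size_mul P_neq0 Q_neq0; rewrite PQ size_quadratic //.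
  by case: (size P + size Q)%N => [|[|[|[|[]]]]].
have [size_P|size_P] := leqP (size P) 1.
  left; have PE := size1_polyC size_P.
  have [k P0E] : exists k, P`_0 = k%:P%:P.
    apply: (@common_divisor_X12_B12 _ Q`_2 (- Q`_1)).
      by rewrite -coefCM -PE PQ coef_quadratic.
    by rewrite mulrN -coefCM -PE PQ coef_quadratic opprK.
  by exists k; rewrite PE P0E.
have size_P2 : (size P <= 2)%N by lia.
have size_Q2 : (size Q <= 2)%N by lia.
have [c2 c1 c0] := coef_mul_linear size_P2 size_Q2.
exfalso; apply: (@no_linear_factorization P`_1 P`_0 Q`_1 Q`_0).
- by rewrite -c2 PQ coef_quadratic.
- by rewrite addrC -c1 PQ coef_quadratic.
- by rewrite -c0 PQ coef_quadratic.
Qed.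

Lemma Vpoly_irreducible : irreducible_mpoly (Vpoly v d).
Proof.
split; first by rewrite (msize_Vpoly _ d_neq0).
move=> p q Fpq; have : nest p * nest q = nest (Vpoly v d) by rewrite Fpq nestM.
have msize_C (k : C) : (msize k%:MP <= 1)%N by rewrite msizeC leq_b1.
by case/nest_Vpoly_factor => -[k]; rewrite -nestC => /nest_inj->; [left|right].
Qed.

End Irreducibility.

Ltac local_eq_ring :=
  repeat rewrite ?(comp_mpolyD, comp_mpolyB, comp_mpolyN, comp_mpolyZ, comp_mpolyC,
                   comp_mpolyXU) (rmorphM (comp_mpoly _)) /=;
  rewrite ?(comp_mpolyD, comp_mpolyB, comp_mpolyN, comp_mpolyZ, comp_mpolyC, comp_mpolyXU);
  rewrite ?mul0r -!mul_mpolyC; ring.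

Definition base_local_eq (C : numFieldType) (v d : C) : {mpoly C[2]} :=
  d *: mono2 2 0 + (2%:R * v) *: mono2 1 1 + d *: mono2 0 2
  + (- (2%:R * v)) *: mono2 0 3 + (- (2%:R * v)) *: mono2 2 1
  + d *: mono2 0 4 + (2%:R * v) *: mono2 1 3 + d *: mono2 2 2.

Lemma local_eq_Vpoly100 (C : numFieldType) (v d : C) :
  local_eq (Vpoly v d) 1 0 0 = base_local_eq v d.
Proof. rewrite /local_eq oner_neq0 /Vpoly /Xpoly /base_local_eq /mono2; local_eq_ring. Qed.

Lemma local_eq_Vpoly010 (C : numFieldType) (v d : C) :
  local_eq (Vpoly v d) 0 1 0 = base_local_eq (- v) d.
Proof.
rewrite /local_eq eqxx /= oner_neq0 /Vpoly /Xpoly /base_local_eq /mono2; local_eq_ring.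
Qed.

Definition d2v_local_eq (C : numFieldType) (v : C) : {mpoly C[2]} :=
  (2%:R * v) *: mono2 2 0 + (4%:R * v) *: mono2 1 1 + (4%:R * v) *: mono2 0 2
  + (4%:R * v) *: mono2 0 3 + (2%:R * v) *: mono2 1 2 + (2%:R * v) *: mono2 2 1
  + (2%:R * v) *: mono2 0 4 + (2%:R * v) *: mono2 1 3 + (2%:R * v) *: mono2 2 2.

Lemma local_eq_Vpoly_d2v (C : numFieldType) (v : C) :
  local_eq (Vpoly v (2%:R * v)) 1 (-1) 1 = d2v_local_eq v.
Proof.
rewrite /local_eq oner_neq0 !divr1 /Vpoly /Xpoly /d2v_local_eq /mono2; local_eq_ring.
Qed.

Definition dm2v_local_eq (C : numFieldType) (v : C) : {mpoly C[2]} :=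
  (- (2%:R * v)) *: mono2 2 0 + (4%:R * v) *: mono2 1 1 + (- (4%:R * v)) *: mono2 0 2
  + (4%:R * v) *: mono2 0 3 + (- (2%:R * v)) *: mono2 1 2 + (2%:R * v) *: mono2 2 1
  + (- (2%:R * v)) *: mono2 0 4 + (2%:R * v) *: mono2 1 3 + (- (2%:R * v)) *: mono2 2 2.

Lemma local_eq_Vpoly_dm2v (C : numFieldType) (v : C) :
  local_eq (Vpoly v (- (2%:R * v))) (-1) 1 1 = dm2v_local_eq v.
Proof.
rewrite /local_eq oppr_eq0 oner_neq0 invrN1 !mulrN1 /Vpoly /Xpoly /dm2v_local_eq /mono2.
local_eq_ring.
Qed.

Ltac lcoef_simpl := rewrite !(lcoefD, lcoefZ, lcoef_mono2) /= ?(mulr0, mulr1, addr0, add0r).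

Lemma base_local_eq_node (C : numFieldType) (v d : C) : d ^+ 2 != v ^+ 2 ->
  double_pt (base_local_eq v d) /\ quad_disc (base_local_eq v d) != 0.
Proof.
move=> dv; apply: node_of_quad_disc; rewrite /quad_disc /base_local_eq; lcoef_simpl => //.
rewrite [X in X != 0](_ : _ = 4%:R * (v ^+ 2 - d ^+ 2)); last by ring.
by rewrite mulf_neq0 ?pnatr_eq0 // subr_eq0 eq_sym.
Qed.

Lemma base_local_eq_cusp (C : numFieldType) (v d : C) : v != 0 -> d ^+ 2 = v ^+ 2 ->
  let g := base_local_eq v d in
  [/\ double_pt g, quad_disc g = 0 &
      exists x y : C, ~ (x = 0 /\ y = 0) /\ quad_part g x y = 0 /\ cubic_part g x y != 0].
Proof.
move=> v_neq0 dv; have : d ^+ 2 != 0 by rewrite dv expf_eq0 /= v_neq0.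
rewrite expf_eq0 /= => d_neq0.
rewrite /double_pt /quad_disc /quad_part /cubic_part /base_local_eq; lcoef_simpl; split.
- by do 3!split => //; case=> /eqP; rewrite (negbTE d_neq0).
- by rewrite [in LHS]mulrC -mulrA -expr2 dv; ring.
exists v, (- d); split; first by case=> /eqP; rewrite (negbTE v_neq0).
split; first by transitivity (d * (d ^+ 2 - v ^+ 2)); [ring | rewrite dv subrr mulr0].
rewrite [X in X != 0](_ : _ = 4%:R * d * v ^+ 3).
  by rewrite !mulf_neq0 ?expf_neq0 ?pnatr_eq0.
by transitivity (2%:R * d * v * (v ^+ 2 + d ^+ 2)); [ring | rewrite dv; ring].
Qed.

Lemma d2v_local_eq_node (C : numFieldType) (v : C) : v != 0 ->
  double_pt (d2v_local_eq v) /\ quad_disc (d2v_local_eq v) != 0.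
Proof.
move=> v_neq0; apply: node_of_quad_disc; rewrite /quad_disc /d2v_local_eq; lcoef_simpl => //.
rewrite [X in X != 0](_ : _ = - (16%:R * v ^+ 2)); last by ring.
by rewrite oppr_eq0 mulf_neq0 ?expf_neq0 ?pnatr_eq0.
Qed.

Lemma dm2v_local_eq_node (C : numFieldType) (v : C) : v != 0 ->
  double_pt (dm2v_local_eq v) /\ quad_disc (dm2v_local_eq v) != 0.
Proof.
move=> v_neq0; apply: node_of_quad_disc; rewrite /quad_disc /dm2v_local_eq; lcoef_simpl => //.
rewrite [X in X != 0](_ : _ = - (16%:R * v ^+ 2)); last by ring.
by rewrite oppr_eq0 mulf_neq0 ?expf_neq0 ?pnatr_eq0.
Qed.

Section DoublePoints.
Variables (C : numFieldType) (v d : C).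
Hypotheses (d_neq0 : d != 0) (v_neq0 : v != 0).
Local Notation F := (Vpoly v d).

Lemma singular_pt_base : singular_pt F 1 0 0 /\ singular_pt F 0 1 0.
Proof.
by split; apply/(singular_ptP d_neq0 v_neq0); [constructor 1 | constructor 2];
  exact: proj_eq_refl.
Qed.

Lemma is_node_base : d ^+ 2 != v ^+ 2 -> is_node F 1 0 0 /\ is_node F 0 1 0.
Proof.
have [sing100 sing010] := singular_pt_base.
move=> dv; split; split=> //=; rewrite (local_eq_Vpoly100, local_eq_Vpoly010);
  by apply: base_local_eq_node; rewrite ?sqrrN.
Qed.

Lemma is_ordinary_cusp_base :
  d ^+ 2 = v ^+ 2 -> is_ordinary_cusp F 1 0 0 /\ is_ordinary_cusp F 0 1 0.
Proof.
have [sing100 sing010] := singular_pt_base.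
move=> dv; split; split=> //=; rewrite (local_eq_Vpoly100, local_eq_Vpoly010);
  by apply: base_local_eq_cusp; rewrite ?oppr_eq0 ?sqrrN.
Qed.

Lemma is_node_d2v : d = 2%:R * v -> is_node F 1 (-1) 1.
Proof.
move=> d2v; split; first by apply/(singular_pt_d2v d_neq0 v_neq0 _ _ _ d2v); constructor 3;
  exact: proj_eq_refl.
by rewrite /= d2v local_eq_Vpoly_d2v; apply: d2v_local_eq_node.
Qed.

Lemma is_node_dm2v : d = - (2%:R * v) -> is_node F (-1) 1 1.
Proof.
move=> dm2v; split; first by apply/(singular_pt_dm2v d_neq0 v_neq0 _ _ _ dm2v); constructor 3;
  exact: proj_eq_refl.
by rewrite /= dm2v local_eq_Vpoly_dm2v; apply: dm2v_local_eq_node.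
Qed.

End DoublePoints.

Theorem lemma7p2 (R : rcfType) (v d : R[i]) :
  d != 0 -> v != 0 ->
  let F := Vpoly v d in
  [/\
   (* d <> +-2v *)
   (d != 2%:R * v -> d != - (2%:R * v) ->
      [/\ (forall a b c, singular_pt F a b c <->
                         proj_eq 1 0 0 a b c \/ proj_eq 0 1 0 a b c),
          msize F = 5%N, irreducible_mpoly F,
          (d ^+ 2 != v ^+ 2 -> is_node F 1 0 0 /\ is_node F 0 1 0) &
          (d ^+ 2 = v ^+ 2 ->
             is_ordinary_cusp F 1 0 0 /\ is_ordinary_cusp F 0 1 0)]),
   (* d = 2v *)
   (d = 2%:R * v ->
      [/\ irreducible_mpoly F,
          (forall a b c, singular_pt F a b c <->
             [\/ proj_eq 1 0 0 a b c, proj_eq 0 1 0 a b c | proj_eq 1 (-1) 1 a b c]) &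
          is_node F 1 (-1) 1]) &
   (* d = -2v *)
   (d = - (2%:R * v) ->
      [/\ irreducible_mpoly F,
          (forall a b c, singular_pt F a b c <->
             [\/ proj_eq 1 0 0 a b c, proj_eq 0 1 0 a b c | proj_eq (-1) 1 1 a b c]) &
          is_node F (-1) 1 1])].
Proof.
move=> d_neq0 v_neq0 F; have irrF := Vpoly_irreducible d_neq0 v_neq0.
split=> [d_neq2v d_neqm2v | d2v | dm2v]; split=> //.
- by move=> a b c; exact: singular_pt_generic.
- exact: msize_Vpoly.
- exact: is_node_base.
- exact: is_ordinary_cusp_base.
- by move=> a b c; exact: singular_pt_d2v.
- exact: is_node_d2v.
- by move=> a b c; exact: singular_pt_dm2v.
- exact: is_node_dm2v.
Qed.
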